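(* Let $(D,\Sigma)$ be a strongly recursive tropical linear series of rank $r$ on a metric graph $\Gamma$, with $\Sigma\subseteq R(D)$. Let $v\in\Gamma$ be a point of valence $2$ with $v\notin\mathrm{supp}(D)$ and tangent vectors $\eta_1,\eta_2$, and assume $s_{\eta_1}[i]+s_{\eta_2}[r-i]=0$ for all $0\le i\le r$. Then the local array of $\Sigma$ at $v$ (with respect to the ordering $\eta_1,\eta_2$) is the redundant closure of the standard permutation array of rank $r$ and dimension $2$, i.e. of $\{(i,r-i):0\le i\le r\}$.
   Context: Metric graphs and functions. A metric graph is obtained from a finite connected graph by identifying each edge with a closed interval of positive length. $T_v(\Gamma)$ is the set of outgoing tangent directions at $v$ and the valence is $|T_v(\Gamma)|$. $\mathrm{PL}(\Gamma)$ is the set of continuous piecewise linear functions with integer slopes, and $\mathrm{sl}_\eta(f)$ is the outgoing slope along $\eta$. We set $\mathrm{ord}_v(f)=-\sum_\eta\mathrm{sl}_\eta(f)$ and $\mathrm{div}(f)=\sum_v\mathrm{ord}_v(f)v$. For a divisor $D$ (finite formal integer sum of points, support $\mathrm{supp}(D)$), $R(D)=\{f:D+\mathrm{div}(f)\ge0\}$. Tropical linear series. A tropical linear series of rank $r$ is $(D,\Sigma)$ with $\Sigma\subseteq R(D)$ a finitely generated tropical submodule (closed under $\min\{f_i+a_i\}$) such that: (1) every effective $E$ of degree $r$ admits $f\in\Sigma$ with $\mathrm{div}(f)+D\ge E$; (2) every $r+2$ functions of $\Sigma$ are tropically dependent (there are $a_i$ with $\min_i(f_i+a_i)$ attained at least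 twice everywhere). It is strongly recursive (recursively in $r$) if: (3) every $r$ functions lie in a strongly recursive subseries of rank $r-1$; (4) for $S_1,S_2\subseteq\Sigma$ of sizes $s_1,s_2\le r$ with $s_1+s_2\ge r+2$, there are strongly recursive subseries $\Sigma_1\supseteq S_1$ and $\Sigma_2\supseteq S_2$ of ranks $s_1-1$ and $s_2-1$ whose intersection contains a strongly recursive tropical linear series of rank $s_1+s_2-r-2$. Local arrays. For a tropical linear series of rank $r$ the slope set $\{\mathrm{sl}_\eta(f):f\in\Sigma\}$ has exactly $r+1$ elements $s_\eta[0]<\dots<s_\eta[r]$. The local array at $v$ with tangent ordering $\eta_1,\dots,\eta_d$ is $\{\mathbf x\in[r]^d:\exists f\in\Sigma,\ \mathrm{sl}_{\eta_i}(f)=s_{\eta_i}[x_i]\ \forall i\}$, where $[r]=\{0,\dots,r\}$. Redundant closure. For $P\subseteq[r]^d$, a point $\mathbf x$ is redundant if it is the coordinatewise minimum of some $\mathcal H\subseteq P$ with $|\mathcal H|\ge2$ whose every member shares a coordinate with $\mathbf x$. The redundant closure is $P$ together with its redundant points. *)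

From HB Require Import structures.
From mathcomp Require Import all_boot all_order all_algebra.
From mathcomp Require Import boolp classical_sets reals.

Set Implicit Arguments.
Unset Strict Implicit.
Unset Printing Implicit Defensive.

Import Order.TTheory GRing.Theory Num.Theory.
Local Open Scope ring_scope.

(* Metric graphs: a finite connected (multi)graph, loops allowed,       *)
(* each edge identified with the interval [0, len e], parameter 0 at    *)
(* [msrc e] and [len e] at [mtgt e].                                    *)

Definition madj (V E : finType) (s t : E -> V) : rel V :=
  [rel u w | [exists e, ((s e == u) && (t e == w)) || ((s e == w) && (t e == u))]].

Record metric_graph (R : realType) := MetricGraph {
  mV : finType;
  mE : finType;
  msrc : mE -> mV;
  mtgt : mE -> mV;
  mlen : mE -> R;
  mlen_pos : forall e, 0 < mlen e;
  mconn : forall u w : mV, connect (madj msrc mtgt) u w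
}.

Section MG.
Variables (R : realType) (G : metric_graph R).

Definition gpoint : Type :=
  (mV G + {e : mE G & {t : R | 0 < t < mlen e}})%type.

Definition epoint (e : mE G) (t : R) : gpoint :=
  if t == 0 then inl (msrc e)
  else if t == mlen e then inl (mtgt e)
  else match insub t : option {t : R | 0 < t < mlen e} with
       | Some u => inr (existT _ e u)
       | None => inl (msrc e)
       end.

Definition fedge (f : gpoint -> R) (e : mE G) (t : R) : R := f (epoint e t).

(* Tangent directions: (e, true) = along e in increasing parameter,
   (e, false) = along e in decreasing parameter. *)
Definition dir : Type := (mE G * bool)%type.

Definition tangents (x : gpoint) : seq dir :=
  match x with
  | inl v => [seq (e, true) | e <- enum (mE G) & msrc e == v]
             ++ [seq (e, false) | e <- enum (mE G) & mtgt e == v]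
  | inr p => [:: (tag p, true); (tag p, false)]
  end.

Definition valence (x : gpoint) : nat := size (tangents x).

Definition gbase (x : gpoint) (eta : dir) : R :=
  match x with
  | inl _ => if eta.2 then 0 else mlen eta.1
  | inr p => val (tagged p)
  end.

(* Outgoing slope sl_eta(f) at x along eta (meaningful for eta in T_x and f PL). *)
Definition slope (f : gpoint -> R) (x : gpoint) (eta : dir) : int :=
  xget 0%R (fun s : int => exists2 eps : R, 0 < eps &
    forall h : R, 0 < h < eps ->
      fedge f eta.1 (gbase x eta + (if eta.2 then h else - h))
      = fedge f eta.1 (gbase x eta) + s%:~R * h).

Definition PL (f : gpoint -> R) : Prop :=
  forall e : mE G, exists (n : nat) (a : nat -> R) (m : nat -> int),
    [/\ a 0%N = 0, a n = mlen e,
        (forall i, (i < n)%N -> a i < a i.+1) &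
        (forall i t, (i < n)%N -> a i <= t <= a i.+1 ->
           fedge f e t = fedge f e (a i) + (m i)%:~R * (t - a i))].

Definition ord (f : gpoint -> R) (x : gpoint) : int :=
  - \sum_(eta <- tangents x) slope f x eta.

Definition divisor_fin_supp (D : gpoint -> int) : Prop :=
  exists s : seq gpoint, forall x, D x != 0 -> x \in s.

Definition in_RD (D : gpoint -> int) (f : gpoint -> R) : Prop :=
  PL f /\ forall x, 0 <= D x + ord f x.

Definition fsig := (gpoint -> R) -> Prop.

Definition tmin (n : nat) (g : 'I_n.+1 -> gpoint -> R) (a : 'I_n.+1 -> R)
  (x : gpoint) : R :=
  \big[Num.min/(g ord0 x + a ord0)]_(i < n.+1) (g i x + a i).

Definition fg_tropical_submodule (S : fsig) : Prop :=
  (forall n (g : 'I_n.+1 -> gpoint -> R) a,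
      (forall i, S (g i)) -> S (tmin g a)) /\
  exists m (gens : 'I_m -> gpoint -> R),
    (forall i, S (gens i)) /\
    forall f, S f -> exists n (idx : 'I_n.+1 -> 'I_m) (a : 'I_n.+1 -> R),
      forall x, f x = tmin (fun i => gens (idx i)) a x.

Definition trop_dependent (n : nat) (fs : 'I_n -> gpoint -> R) : Prop :=
  exists a : 'I_n -> R, forall x, exists i j, [/\ i != j,
    fs i x + a i = fs j x + a j &
    forall k, fs i x + a i <= fs k x + a k].

Definition TLS (r : nat) (D : gpoint -> int) (S : fsig) : Prop :=
  [/\ fg_tropical_submodule S,
      (forall f, S f -> in_RD D f),
      (forall Es : seq gpoint, size Es = r ->
         exists2 f, S f & forall x, (count_mem x Es)%:Z <= D x + ord f x) &
      (forall fs : 'I_(r + 2) -> gpoint -> R, (forall i, S (fs i)) ->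
         trop_dependent fs)].

Definition subS (S1 S2 : fsig) : Prop := forall f, S1 f -> S2 f.

(* strongly recursive tropical linear series (least predicate, which is
   the recursive definition on the rank since all recursive calls are
   at strictly smaller ranks) *)
Inductive SR (D : gpoint -> int) : nat -> fsig -> Prop :=
| SR_intro (r : nat) (S : fsig) :
    TLS r D S ->
    (0 < r)%N ->
    (forall fs : 'I_r -> gpoint -> R, injective fs -> (forall i, S (fs i)) ->
       exists S' : fsig, [/\ subS S' S, (forall i, S' (fs i)) & SR D r.-1 S']) ->
    (forall (s1 s2 : nat) (F1 : 'I_s1 -> gpoint -> R) (F2 : 'I_s2 -> gpoint -> R),
       (s1 <= r)%N -> (s2 <= r)%N -> (r + 2 <= s1 + s2)%N ->
       injective F1 -> injective F2 ->
       (forall i, S (F1 i)) -> (forall i, S (F2 i)) ->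
       exists (S1 S2 : fsig),
         [/\ subS S1 S, subS S2 S, (forall i, S1 (F1 i)), (forall i, S2 (F2 i)) &
             SR D s1.-1 S1] /\ SR D s2.-1 S2 /\ (
             exists S3 : fsig, (forall f, S3 f -> S1 f /\ S2 f) /\
                               SR D (s1 + s2 - r - 2) S3)) ->
    SR D r S
| SR_intro0 (S : fsig) : TLS 0 D S -> SR D 0 S.

Definition slope_seq (S : fsig) (x : gpoint) (eta : dir) : seq int :=
  xget [::] (fun l : seq int => sorted <%R l /\
    forall k, k \in l <-> exists2 f, S f & slope f x eta = k).

Definition sidx (S : fsig) (x : gpoint) (eta : dir) (i : nat) : int :=
  nth 0 (slope_seq S x eta) i.

Definition local_array (r d : nat) (S : fsig) (x : gpoint) (etas : 'I_d -> dir)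
  (p : {ffun 'I_d -> 'I_r.+1}) : Prop :=
  exists2 f, S f & forall i, slope f x (etas i) = sidx S x (etas i) (p i).

End MG.

Section Arrays.
Variables (r d : nat).
Notation pt := {ffun 'I_d -> 'I_r.+1}.

Definition redundant (P : {set pt}) (x : pt) : bool :=
  [exists H : {set pt},
     [&& H \subset P, (2 <= #|H|)%N,
         [forall i, (x i : nat) == \big[minn/r]_(h in H) (h i : nat)] &
         [forall h in H, exists i, h i == x i]]].

Definition redundant_closure (P : {set pt}) : {set pt} :=
  P :|: [set x | redundant P x].
End Arrays.

Definition std_perm_array2 (r : nat) : {set {ffun 'I_2 -> 'I_r.+1}} :=
  [set x : {ffun 'I_2 -> 'I_r.+1} | (x ord0 + x (lift ord0 ord0) == r)%N].

From HB Require Import structures.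
From mathcomp Require Import all_boot all_order all_algebra.
From mathcomp Require Import boolp classical_sets reals.
From mathcomp Require Import lra ring zify.
Import Order.TTheory GRing.Theory Num.Theory.
Set Implicit Arguments.
Unset Strict Implicit.
Unset Printing Implicit Defensive.

(* For f in S, write i and j for the positions of its outgoing slopes along
   eta1 and eta2 in the increasing lists of all slopes of S there.  As D v = 0
   and v has valence 2, these two slopes sum to at most 0, which by the
   symmetry hypothesis forces i + j <= r.  Conversely, the chips of condition
   (1), r - l of them on eta1 and l on eta2 close to v and off supp D, force
   at least r - l and l strict kinks of f on the two sides, so i >= r - l and
   j >= l: every (r - l, l) is realised.  The minimum of two members of S,
   normalised to agree at v, realises the coordinatewise minimum of their
   positions, and the points with i + j <= r are exactly the redundant
   closure.  Both slope lists have exactly r + 1 entries, because r + 2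
   members of S with distinct slopes along a tangent cannot be tropically
   dependent just beyond v. *)

Section Arrays2.
Variable r : nat.
Notation pt := {ffun 'I_2 -> 'I_r.+1}.
Local Notation i1 := (lift ord0 ord0 : 'I_2).

Lemma ord2_cases (i : 'I_2) : i = ord0 \/ i = i1.
Proof. by case: i => [[|[|//]] ?]; [left | right]; apply: val_inj. Qed.

Definition pair2 (a b : 'I_r.+1) : pt := [ffun i => if i == ord0 then a else b].

Lemma redundant_std2_sum_le (x : pt) :
  redundant (std_perm_array2 r) x -> (x ord0 + x i1 <= r)%N.
Proof.
case/existsP=> H /and4P[/fintype.subsetP HP H2 /forallP Hmin _].
have [h hH] : {h | h \in H} by apply/sigW/card_gt0P; apply: leq_trans H2.
have /eqP -> := Hmin ord0; have /eqP -> := Hmin i1.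
have := HP h hH; rewrite inE => /eqP/eq_leq; apply: leq_trans.
by apply: leq_add; apply: (@bigmin_le_cond _ nat).
Qed.

Lemma redundant_std2_of_sum_lt (x : pt) :
  (x ord0 + x i1 < r)%N -> redundant (std_perm_array2 r) x.
Proof.
move=> xr.
pose hA := pair2 (x ord0) (inord (r - x ord0)).
pose hB := pair2 (inord (r - x i1)) (x i1).
have [hA0 hA1 hB0 hB1] : [/\ hA ord0 = x ord0 :> nat, hA i1 = r - x ord0 :> nat,
    hB ord0 = r - x i1 :> nat & hB i1 = x i1 :> nat].
  by rewrite !ffunE /= !inordK ?ltnS ?leq_subr.
have hAB : hA != hB by apply/eqP => /(congr1 (fun h : pt => h ord0 : nat)); lia.
apply/existsP; exists [set hA; hB]; apply/and4P; split.
- by apply/fintype.subsetP => h; rewrite !inE => /orP[] /eqP ->; apply/eqP; lia.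
- by rewrite cards2 hAB.
- apply/forallP => i; rewrite eq_le; apply/andP; split.
    apply: (@le_bigmin _ nat) => [|h]; first exact: leq_ord.
    rewrite !inE leEnat => /orP[] /eqP ->; case: (ord2_cases i) => ->;
      rewrite ?hA0 ?hA1 ?hB0 ?hB1; lia.
  case: (ord2_cases i) => ->.
    by apply: (@bigmin_inf _ nat _ _ hA); rewrite ?inE ?eqxx ?hA0.
  by apply: (@bigmin_inf _ nat _ _ hB); rewrite ?inE ?eqxx ?orbT ?hB1.
- by apply/forall_inP => h; rewrite !inE => /orP[] /eqP ->; apply/existsP;
    [exists ord0 | exists i1]; apply/eqP/val_inj.
Qed.

Lemma mem_redundant_closure_std2 (x : pt) :
  (x \in redundant_closure (std_perm_array2 r)) = (x ord0 + x i1 <= r)%N.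
Proof.
rewrite !inE; apply/idP/idP => [/orP[/eqP -> //|]|].
  exact: redundant_std2_sum_le.
rewrite leq_eqVlt => /orP[-> //|/redundant_std2_of_sum_lt ->]; exact: orbT.
Qed.

End Arrays2.

Local Open Scope ring_scope.

Section RealFacts.
Variable R : realType.

Lemma min_gt0 (e e' : R) : 0 < e -> 0 < e' ->
  [/\ 0 < Num.min e e', Num.min e e' <= e & Num.min e e' <= e'].
Proof. by move=> e0 e0'; rewrite lt_min e0 e0' !ge_min !lexx ?orbT. Qed.

Lemma mem_piece_co (a : nat -> R) n t : a 0%N <= t -> t < a n ->
  exists i, (i < n)%N /\ a i <= t < a i.+1.
Proof.
elim: n => [|n IH] t0 tn; first lra.
have [tn'|tn'] := ltP t (a n); last by exists n; rewrite tn' tn.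
by have [i [i1 i2]] := IH t0 tn'; exists i; split=> //; apply: ltnW.
Qed.

Lemma mem_piece_oc (a : nat -> R) n t : a 0%N < t -> t <= a n ->
  exists i, (i < n)%N /\ a i < t <= a i.+1.
Proof.
elim: n => [|n IH] t0 tn; first lra.
have [tn'|tn'] := leP t (a n); last by exists n; rewrite tn' tn.
by have [i [i1 i2]] := IH t0 tn'; exists i; split=> //; apply: ltnW.
Qed.

Lemma common_eps (T : eqType) (P : T -> R -> Prop) (s : seq T) :
  (forall x e e', P x e -> 0 < e' <= e -> P x e') ->
  (forall x, x \in s -> exists2 e, 0 < e & P x e) ->
  exists2 e, 0 < e & forall x, x \in s -> P x e.
Proof.
move=> Pdown; elim: s => [|a s IH] Ps; first by exists 1.
have [e e0 He] : exists2 e : R, 0 < e & forall x, x \in s -> P x e.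
  by apply: IH => x xs; apply: Ps; rewrite in_cons xs orbT.
have [ea ea0 Ha] := Ps a (mem_head _ _).
have [m0 me mea] := min_gt0 e0 ea0.
exists (Num.min e ea) => // x; rewrite in_cons => /orP[/eqP->|xs].
  by apply: Pdown Ha _; rewrite m0.
by apply: Pdown (He x xs) _; rewrite m0.
Qed.

End RealFacts.

Definition signed (R : numDomainType) (b : bool) (h : R) : R := if b then h else - h.

Section LowerEnvelopes.
Variable R : realType.

Lemma affine_sign_germ (a b : R) : exists2 e : R, 0 < e &
  (forall h, 0 <= h < e -> a + b * h <= 0) \/ (forall h, 0 <= h < e -> 0 <= a + b * h).
Proof.
have [-> | a0] := eqVneq a 0.
  exists 1 => //; have [b0|b0] := leP b 0; [left | right] => h /andP[h0 _]; nra.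
have b1 : 0 < `|b| + 1 by rewrite ltr_wpDl.
exists (`|a| / (`|b| + 1)); first by rewrite divr_gt0 ?normr_gt0.
have small h : 0 <= h < `|a| / (`|b| + 1) -> `|b| * h < `|a|.
  by rewrite ltr_pdivlMr // => /andP[h0 ha]; nra.
have [bl bl'] := (ler_norm b, ler_norm (- b)); rewrite normrN in bl'.
have [an | ap] := ltP a 0.
  by left=> h /[dup] /andP[h0 _] /small; rewrite (ltr0_norm an) => bh; nra.
have {ap a0} ap : 0 < a by rewrite lt_neqAle eq_sym a0.
by right=> h /[dup] /andP[h0 _] /small; rewrite (gtr0_norm ap) => bh; nra.
Qed.

(* Pigeonhole over [n * n + 1] points: some pair of lines would meet twice. *)
Lemma distinct_slopes_meet_finitely (n : nat) (c : 'I_n -> R) (s : 'I_n -> int)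
    (e : R) : 0 < e -> injective s ->
  ~ (forall h, 0 < h < e -> exists i j, i != j /\ c i + (s i)%:~R * h = c j + (s j)%:~R * h).
Proof.
move=> e0 s_inj meet.
pose hs (t : 'I_(n * n).+1) : R := e / t.+2%:R.
have hs_in t : 0 < hs t < e.
  by rewrite divr_gt0 ?ltr0n //= ltr_pdivrMr ?ltr0n // ltr_pMr // ltr1n.
have pair_of t : {p : 'I_n * 'I_n | p.1 != p.2 /\
    c p.1 + (s p.1)%:~R * hs t = c p.2 + (s p.2)%:~R * hs t}.
  by apply: cid; have [i [j ?]] := meet _ (hs_in t); exists (i, j).
have [t [t' [tt' same]]] : exists t t', t != t' /\ sval (pair_of t) = sval (pair_of t').
  apply: contrapT => inj; have /leq_card : injective (fun t => sval (pair_of t)).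
    by move=> t t' E; case: (eqVneq t t') => // ne; case: inj; exists t, t'.
  by rewrite card_prod !card_ord ltnn.
case: (pair_of t) same => [[i j] /= [ij Et]].
case: (pair_of t') => [[i' j'] /= [_ Et']] [ii jj]; subst i' j'.
have : ((s i)%:~R - (s j)%:~R) * (hs t - hs t') = 0 :> R by rewrite mulrBr !mulrBl; lra.
move/eqP; rewrite mulf_eq0 subr_eq0 => /orP[/eqP/intr_inj/s_inj/eqP | ]; first exact/negP.
rewrite subr_eq0 => /eqP /(mulfI (lt0r_neq0 e0)) /invr_inj /eqP.
by rewrite eqr_nat !eqSS => /eqP/val_inj/eqP; rewrite (negbTE tt').
Qed.

Variables (I : finType) (i0 : I) (c : I -> R) (m : I -> int).

Definition line i (u : R) : R := c i + (m i)%:~R * u.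

Definition envelope (u : R) : R := \big[Num.min/line i0 u]_i line i u.

Definition active (b : bool) (u : R) i := exists2 e : R, 0 < e &
  forall h, 0 <= h < e -> envelope (u + signed b h) = line i (u + signed b h).

Lemma envelope_le u i : envelope u <= line i u.
Proof. exact: bigmin_le. Qed.

Lemma active_eq b u i : active b u i -> envelope u = line i u.
Proof.
by case=> e e0 /(_ 0); rewrite lexx e0 /signed; case: b; rewrite ?oppr0 addr0 => ->.
Qed.

Lemma envelope_germ b u : exists i, active b u i.
Proof.
rewrite /active /envelope; elim: (index_enum I) => [|k s [i [e e0 He]]].
  by exists i0, 1 => // h _; rewrite big_nil.
have [e' e'0 sign] := affine_sign_germ (line k u - line i u)
  (((m k)%:~R - (m i)%:~R) * signed b 1).
have diffE h : line k (u + signed b h) - line i (u + signed b h) =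
    line k u - line i u + ((m k)%:~R - (m i)%:~R) * signed b 1 * h.
  by rewrite /line /signed; case: (b); ring.
have ee : 0 < Num.min e e' by rewrite lt_min e0 e'0.
have [h_e h_e'] : (forall h, 0 <= h < Num.min e e' -> 0 <= h < e) /\
    (forall h, 0 <= h < Num.min e e' -> 0 <= h < e').
  by split=> h; rewrite lt_min => /and3P[-> he he']; rewrite ?he ?he'.
case: sign => sign; [exists k | exists i]; exists (Num.min e e') => // h hh;
  rewrite big_cons He ?h_e //.
  by rewrite min_l // -subr_le0 diffE sign ?h_e'.
by rewrite min_r // -subr_ge0 diffE sign ?h_e'.
Qed.

Lemma active_slope_antitone u w i j : u < w ->
  active true u i -> active false w j -> m j <= m i.
Proof.
move=> uw /active_eq Ei /active_eq Ej.
have := envelope_le u j; have := envelope_le w i; rewrite Ei Ej /line => Ai Aj.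
by rewrite -(ler_int R); nra.
Qed.

Definition kink (p : R) := forall i j, active true p i -> active false p j -> m i < m j.

Lemma kinks_index_bound (sl : seq int) (e : R) : sorted <%R sl ->
    (forall i, m i \in sl) -> 0 < e ->
  forall n y, (forall k, (k < n)%N -> kink (y + k.+1%:R * e)) ->
  forall i, active true y i -> (n <= index (m i) sl)%N.
Proof.
move=> ss msl e0; elim=> [//|n IH] y kinks i ai.
have [j aj] := envelope_germ true (y + e); have [k ak] := envelope_germ false (y + e).
have n_le : (n <= index (m j) sl)%N.
  apply: IH aj => l ln; have := kinks l.+1 ln.
  by rewrite [l.+2%:R]mulrS mulrDl mul1r addrA.
have jk : m j < m k by apply: (kinks 0%N) => //; rewrite mul1r.
have ki : m k <= m i by apply: active_slope_antitone ai ak; rewrite ltrDl.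
rewrite -[m j](nth_index 0 (msl j)) -[m k](nth_index 0 (msl k)) in jk.
rewrite -[m k](nth_index 0 (msl k)) -[m i](nth_index 0 (msl i)) in ki.
rewrite (lt_sorted_ltn_nth 0 ss) ?inE ?index_mem // in jk.
rewrite (lt_sorted_leq_nth 0 ss) ?inE ?index_mem // in ki.
exact: leq_ltn_trans n_le (leq_trans jk ki).
Qed.

End LowerEnvelopes.

Section Germs.
Variables (R : realType) (G : metric_graph R).
Notation gp := (gpoint G).

Definition germ (f : gp -> R) (x : gp) (eta : dir G) (s : int) :=
  exists2 e : R, 0 < e & forall h, 0 < h < e ->
    fedge f eta.1 (gbase x eta + signed eta.2 h) = fedge f eta.1 (gbase x eta) + s%:~R * h.

Lemma germ_slope f x eta s : germ f x eta s -> slope f x eta = s.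
Proof.
have uniq s1 s2 : germ f x eta s1 -> germ f x eta s2 -> s1 = s2.
  move=> [e e0 He] [e' e0' He']; have [m0 m1 m2] := min_gt0 e0 e0'.
  have h0 : 0 < Num.min e e' / 2 by rewrite divr_gt0.
  have he : 0 < Num.min e e' / 2 < e by rewrite h0 /=; lra.
  have he' : 0 < Num.min e e' / 2 < e' by rewrite h0 /=; lra.
  by have := He _ he; rewrite He' // => /addrI /(mulIf (lt0r_neq0 h0)) /intr_inj ->.
by move=> gs; apply: uniq (xgetPex 0 (ex_intro _ s gs)) gs.
Qed.

Lemma tangents_inl w eta : eta \in tangents (inl w : gp) ->
  (if eta.2 then msrc eta.1 else mtgt eta.1) = w.
Proof. by rewrite mem_cat => /orP[] /mapP[e]; rewrite mem_filter => /andP[/eqP <- _] ->. Qed.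

Lemma tangents_inr p eta : eta \in tangents (inr p : gp) -> eta.1 = tag p.
Proof. by rewrite !inE => /orP[] /eqP->. Qed.

Definition reach (v : gp) (eta : dir G) : R :=
  if eta.2 then mlen eta.1 - gbase v eta else gbase v eta.

Lemma gbase_bounds (v : gp) (eta : dir G) : eta \in tangents v ->
  0 <= gbase v eta <= mlen eta.1 /\ 0 < reach v eta.
Proof.
rewrite /reach; have := mlen_pos eta.1; case: v => [w|p] /= len0.
  by case: eta.2; rewrite ?subr0 lexx ?len0 ?andbT ltW.
move=> /tangents_inr E; case: (tagged p) => t /= /andP[t0 t1]; rewrite E.
by case: eta.2; split; lra.
Qed.

Lemma epoint_inr (e : mE G) (t : R) : 0 < t < mlen e ->
  exists p, [/\ epoint e t = inr p, tag p = e & val (tagged p) = t].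
Proof.
move=> /andP[t0 t1]; rewrite /epoint gt_eqF // lt_eqF //.
by case: insubP => [u _ vu|]; [exists (existT _ e u) | rewrite t0 t1].
Qed.

Lemma epoint_gbase (v : gp) (eta : dir G) : eta \in tangents v ->
  epoint eta.1 (gbase v eta) = v.
Proof.
case: v => [w /tangents_inl|p /tangents_inr E].
  rewrite /epoint /=; have := mlen_pos eta.1.
  by case: eta.2 => len0 <-; rewrite ?eqxx // gt_eqF // eqxx.
have H : 0 < val (tagged p) < mlen eta.1 by rewrite E; case: (tagged p).
have [q [-> E1 E2]] := epoint_inr H; congr inr.
case: p q E E1 E2 {H} => e u [e' u'] /= -> E1 E2; subst e'.
by congr existT; apply: val_inj.
Qed.

Lemma PL_germ (f : gp -> R) (v : gp) (eta : dir G) : PL f -> eta \in tangents v ->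
  germ f v eta (slope f v eta).
Proof.
move=> /(_ eta.1) [n [a [m [a0 an inc pc]]]] /gbase_bounds [/andP[g0 g1] reach0].
suff [s gs] : exists s, germ f v eta s by rewrite (germ_slope gs).
move: reach0; rewrite /germ /reach /signed; case: eta.2 => reach0.
  have [i [iN /andP[ai1 ai2]]] := @mem_piece_co _ a n (gbase v eta) ltac:(lra) ltac:(lra).
  exists (m i), (a i.+1 - gbase v eta); first lra.
  move=> h /andP[h0 h1]; rewrite (pc i) //; last by apply/andP; split; lra.
  by rewrite [fedge f _ (gbase v eta)](pc i) //; [ring | apply/andP; split; lra].
have [i [iN /andP[ai1 ai2]]] := @mem_piece_oc _ a n (gbase v eta) ltac:(lra) ltac:(lra).
exists (- m i), (gbase v eta - a i); first lra.
move=> h /andP[h0 h1]; rewrite (pc i) //; last by apply/andP; split; lra.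
rewrite [fedge f _ (gbase v eta)](pc i) //; last by apply/andP; split; lra.
rewrite rmorphN /=; ring.
Qed.

Definition ray (v : gp) (eta : dir G) (w : R) : gp :=
  epoint eta.1 (gbase v eta + signed eta.2 w).

Lemma ray0 v eta : eta \in tangents v -> ray v eta 0 = v.
Proof. by rewrite /ray /signed; case: eta.2; rewrite ?oppr0 addr0; apply: epoint_gbase. Qed.

Lemma ray_interior (v : gp) (eta : dir G) (w : R) : eta \in tangents v ->
  0 < w < reach v eta -> 0 < gbase v eta + signed eta.2 w < mlen eta.1.
Proof.
move=> /gbase_bounds [/andP [g0 g1] _]; rewrite /reach /signed.
by case: eta.2 => /andP[w0 w1]; apply/andP; split; lra.
Qed.

Lemma ray_inj (v : gp) (eta : dir G) w w' : eta \in tangents v ->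
  0 < w < reach v eta -> 0 < w' < reach v eta -> ray v eta w = ray v eta w' -> w = w'.
Proof.
move=> et /(ray_interior et) ww /(ray_interior et) ww'.
have [p [Ep _ Ew]] := epoint_inr ww; have [p' [Ep' _ Ew']] := epoint_inr ww'.
rewrite /ray Ep Ep' => -[pp']; move: Ew'; rewrite -pp' Ew /signed.
by case: eta.2 => /addrI // /oppr_inj.
Qed.

Lemma germ_ray (f : gp -> R) v eta s : eta \in tangents v -> germ f v eta s ->
  exists2 e : R, 0 < e & forall h, 0 < h < e -> f (ray v eta h) = f v + s%:~R * h.
Proof. by move=> et [e e0 He]; exists e => // h /He; rewrite /fedge epoint_gbase. Qed.

Lemma ray_germ_slope (f : gp -> R) v eta s : eta \in tangents v ->
  (exists2 e : R, 0 < e & forall h, 0 < h < e -> f (ray v eta h) = f v + s%:~R * h) ->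
  slope f v eta = s.
Proof.
by move=> et [e e0 He]; apply: germ_slope; exists e => // h /He; rewrite /fedge epoint_gbase.
Qed.

Lemma uniform_germ n (fs : 'I_n -> gp -> R) (v : gp) (eta : dir G) :
  (forall k, PL (fs k)) -> eta \in tangents v ->
  exists2 e : R, 0 < e & forall k h, 0 < h < e ->
    fs k (ray v eta h) = fs k v + (slope (fs k) v eta)%:~R * h.
Proof.
move=> PLfs et.
pose Germ k e := forall h, 0 < h < e ->
  fs k (ray v eta h) = fs k v + (slope (fs k) v eta)%:~R * h.
have [e e0 He] : exists2 e : R, 0 < e & forall k, k \in enum 'I_n -> Germ k e.
  apply: common_eps => [k e e' H /andP[e'0 e'e] h /andP[h0 h1] | k _].
    by apply: H; rewrite h0; lra.
  exact: germ_ray et (PL_germ (PLfs k) et).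
by exists e => // k; apply: He; rewrite mem_enum.
Qed.

Lemma ord_ray (f : gp -> R) (v : gp) (eta : dir G) (w : R) (rho lam : int) :
  eta \in tangents v -> 0 < w < reach v eta ->
  (exists2 e : R, 0 < e & forall h, 0 < h < e ->
     f (ray v eta (w + h)) = f (ray v eta w) + rho%:~R * h) ->
  (exists2 e : R, 0 < e & forall h, 0 < h < e ->
     f (ray v eta (w - h)) = f (ray v eta w) - lam%:~R * h) ->
  ord f (ray v eta w) = lam - rho.
Proof.
move=> et /(ray_interior et) wr [e1 e10 H1] [e2 e20 H2].
have [p [Ep E1 E2]] := epoint_inr wr.
rewrite /ord [ray _ _ _]Ep /= big_cons big_cons big_nil E1.
set t := gbase v eta + signed eta.2 w in E2.
have rayE h b : fedge f eta.1 (val (tagged p) + signed b h) =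
    f (ray v eta (w + (if b == eta.2 then h else - h))).
  rewrite E2 /ray /fedge /t /signed.
  by case: (b); case: (eta.2) => /=; congr (f (epoint _ _)); ring.
have Ew : fedge f eta.1 (val (tagged p)) = f (ray v eta w) by rewrite E2.
have slope_fwd : slope f (inr p) (eta.1, eta.2) = rho.
  by apply: germ_slope; exists e1 => // h hh; rewrite /= Ew rayE eqxx H1.
have slope_bwd : slope f (inr p) (eta.1, ~~ eta.2) = - lam.
  apply: germ_slope; exists e2 => // h hh; rewrite /= Ew rayE.
  by case: (eta.2); rewrite /= H2 // rmorphN /=; ring.
by move: slope_fwd slope_bwd; case: (eta.2) => /= -> ->; ring.
Qed.

Lemma ray_avoid_support (D : gp -> int) (v : gp) (eta : dir G) :
  divisor_fin_supp D -> eta \in tangents v -> exists2 d : R, 0 < d &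
    forall w, 0 < w < d -> D (ray v eta w) = 0.
Proof.
move=> [s Hs] et; have [_ reach0] := gbase_bounds et.
pose Avoid y e := e <= reach v eta /\ forall w, 0 < w < e -> ray v eta w != y.
have [e e0 He] : exists2 e : R, 0 < e & forall y, y \in s -> Avoid y e.
  apply: common_eps => [y e e' [H1 H2] /andP[e'0 e'e] | y _].
    by split=> [|w /andP[w0 we]]; [lra | apply: H2; rewrite w0; lra].
  case: (pselect (exists2 w, 0 < w < reach v eta & ray v eta w = y)).
    move=> [w /[dup] ww /andP[w0 wr] <-]; exists w => //; split=> [|w' /andP[w'0 w'w]].
      exact: ltW.
    apply/eqP => /ray_inj E; have : w' = w by apply: E => //; rewrite ?w'0; lra.
    lra.
  move=> NE; exists (reach v eta) => //; split=> // w ww; apply/eqP => E.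
  by apply: NE; exists w.
have [m0 m1 m2] := min_gt0 e0 reach0.
exists (Num.min e (reach v eta)) => // w /andP[w0 ww].
apply/eqP; apply: contraT => /Hs /He [_ H].
have /H : 0 < w < e by rewrite w0; lra.
by rewrite eqxx.
Qed.

End Germs.

Definition slope_rank (R : realType) (G : metric_graph R) (S : (gpoint G -> R) -> Prop)
  (v : gpoint G) (eta : dir G) (f : gpoint G -> R) : nat :=
  index (slope f v eta) (slope_seq S v eta).

Section LocalStructure.
Variables (R : realType) (G : metric_graph R).
Notation gp := (gpoint G).
Variables (D : gp -> int) (S : (gp -> R) -> Prop).
Hypothesis S_fg : fg_tropical_submodule S.
Hypothesis S_RD : forall f, S f -> in_RD D f.
Variables (v : gp) (eta : dir G).
Hypothesis eta_v : eta \in tangents v.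

Lemma PL_of_S f : S f -> PL f.
Proof. by case/S_RD. Qed.

(* Near [v], each generator is linear along [eta]; hence every member of [S],
   a tropical combination of generators, is an envelope of lines there. *)
Lemma ray_envelope_repr : exists (GL : seq int) (d0 : R), [/\ 0 < d0, d0 <= reach v eta,
   (forall k, k \in GL -> exists2 g, S g & slope g v eta = k) &
   forall f, S f -> exists n (c : 'I_n.+1 -> R) (m : 'I_n.+1 -> int),
     (forall i, m i \in GL) /\
     forall u, 0 <= u < d0 -> f (ray v eta u) = envelope ord0 c m u].
Proof.
case: S_fg => _ [mg [gens [Sgens gens_span]]].
exists [seq slope (gens j) v eta | j <- enum 'I_mg].
have [e e0 He] := uniform_germ (fun j => PL_of_S (Sgens j)) eta_v.
have [_ reach0] := gbase_bounds eta_v.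
have [d0 d0e d0r] := min_gt0 e0 reach0.
exists (Num.min e (reach v eta)); split => //.
  by move=> k /mapP[j _ ->]; exists (gens j).
have gensE j u : 0 <= u < Num.min e (reach v eta) ->
    gens j (ray v eta u) = gens j v + (slope (gens j) v eta)%:~R * u.
  move=> /andP[u0 u1]; have [->|un] := eqVneq u 0; first by rewrite ray0 // mulr0 addr0.
  by apply: He; rewrite lt_neqAle eq_sym un u0 /=; lra.
move=> f Sf; have [n [idx [a fE]]] := gens_span f Sf.
exists n, (fun i => gens (idx i) v + a i), (fun i => slope (gens (idx i)) v eta).
split=> [i|u uu]; first by apply/mapP; exists (idx i); rewrite ?mem_enum.
rewrite fE /tmin /envelope (eq_bigr (fun i => line (fun i => gens (idx i) v + a i)
  (fun i => slope (gens (idx i)) v eta) i u)) => [|i _]; last by rewrite gensE // /line; ring.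
by rewrite gensE // /line addrAC.
Qed.

Section Envelope.
Variables (f : gp -> R) (d0 : R) (n : nat) (c : 'I_n.+1 -> R) (m : 'I_n.+1 -> int).
Hypothesis d0_gt0 : 0 < d0.
Hypothesis fE : forall u, 0 <= u < d0 -> f (ray v eta u) = envelope ord0 c m u.

Lemma slope_envelope i : active ord0 c m true 0 i -> slope f v eta = m i.
Proof.
move=> ai; have i0 := active_eq ai; case: ai => e e0 He.
have [e1 e1e e1d] := min_gt0 e0 d0_gt0.
apply: ray_germ_slope eta_v _; exists (Num.min e d0) => // h /andP[h0 h1].
rewrite fE; last by apply/andP; split; lra.
rewrite -(ray0 eta_v) fE; last by apply/andP; split; lra.
have -> : envelope ord0 c m h = line c m i h.
  by have := He h; rewrite /signed /= add0r; apply; apply/andP; split; lra.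
by rewrite i0 /line; ring.
Qed.

Lemma ord_ray_envelope p i j : 0 < p < d0 -> d0 <= reach v eta ->
  active ord0 c m true p i -> active ord0 c m false p j ->
  ord f (ray v eta p) = m j - m i.
Proof.
move=> /andP[p0 pd] d0r ai aj; have Ei := active_eq ai; have Ej := active_eq aj.
case: ai aj => [e1 e10 H1] [e2 e20 H2].
have fp : f (ray v eta p) = envelope ord0 c m p by apply: fE; rewrite ltW.
apply: ord_ray => //; first by rewrite p0; lra.
  have [q0 q1 q2] := @min_gt0 R e1 (d0 - p) e10 ltac:(lra).
  exists (Num.min e1 (d0 - p)) => // h /andP[h0 h1].
  rewrite fE ?fp ?Ei; last by apply/andP; split; lra.
  by have := H1 h; rewrite /signed => -> //; [rewrite /line; ring | apply/andP; split; lra].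
have [q0 q1 q2] := @min_gt0 R e2 p e20 p0.
exists (Num.min e2 p) => // h /andP[h0 h1].
rewrite fE ?fp ?Ej; last by apply/andP; split; lra.
by have := H2 h; rewrite /signed => -> //; [rewrite /line; ring | apply/andP; split; lra].
Qed.

End Envelope.

Lemma slope_seq_spec : sorted <%R (slope_seq S v eta) /\
  forall k, k \in slope_seq S v eta <-> exists2 f, S f & slope f v eta = k.
Proof.
have [GL [d0 [d0_gt0 _ GL_slopes f_repr]]] := ray_envelope_repr.
have slope_GL f : S f -> slope f v eta \in GL.
  move=> Sf; have [n [c [m [mGL fE]]]] := f_repr f Sf.
  have [i ai] := envelope_germ ord0 c m true 0.
  by rewrite (slope_envelope d0_gt0 fE ai).
apply: (xgetPex [::] (P := fun l : seq int => sorted <%R l /\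
    forall k, k \in l <-> exists2 f, S f & slope f v eta = k)).
exists (sort <=%R (undup [seq k <- GL | `[< exists2 f, S f & slope f v eta = k >]])).
split=> [|k]; first by rewrite sort_lt_sorted undup_uniq.
rewrite mem_sort mem_undup mem_filter; split=> [/andP[/asboolP] //|[f Sf <-]].
by rewrite slope_GL // andbT; apply/asboolP; exists f.
Qed.

(* Each chip placed on the ray close to [v] forces a strict kink of [f], so
   [f] must leave [v] with one of the larger slopes of [S]. *)
Lemma slope_rank_ge_of_chips : exists2 d : R, 0 < d &
  forall f, S f -> forall n (eps : R), 0 < eps -> n%:R * eps < d ->
   (forall k, (k < n)%N -> 1 <= ord f (ray v eta (k.+1%:R * eps))) ->
   (n <= slope_rank S v eta f)%N.
Proof.
have [GL [d0 [d0_gt0 d0r GL_slopes f_repr]]] := ray_envelope_repr.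
have [sorted_ss mem_ss] := slope_seq_spec.
exists d0 => // f Sf n eps eps0 neps chips.
have [n' [c [m [mGL fE]]]] := f_repr f Sf.
have [i ai] := envelope_germ ord0 c m true 0.
rewrite /slope_rank (slope_envelope d0_gt0 fE ai).
apply: (kinks_index_bound sorted_ss _ eps0 _ ai) => [j | k kn j j' aj aj'].
  by apply/mem_ss; apply: GL_slopes.
rewrite add0r in aj aj'.
have pk : 0 < k.+1%:R * eps < d0.
  by rewrite mulr_gt0 ?ltr0n //= (le_lt_trans _ neps) // ler_pM2r // ler_nat.
have := chips k kn; rewrite (ord_ray_envelope fE pk d0r aj aj').
by rewrite -subr_gt0 => /(lt_le_trans ltr01).
Qed.

Lemma size_slope_seq_le r :
  (forall fs : 'I_(r + 2) -> gp -> R, (forall i, S (fs i)) -> trop_dependent fs) ->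
  (size (slope_seq S v eta) <= r.+1)%N.
Proof.
move=> dep; have [sorted_ss mem_ss] := slope_seq_spec.
set sl := slope_seq S v eta in sorted_ss mem_ss *.
rewrite leqNgt; apply/negP => size_gt.
have pick k : {f | S f /\ slope f v eta = nth 0 sl (k : 'I_(r + 2))}.
  apply: cid; have /mem_ss [f Sf fk] : nth 0 sl k \in sl.
    by rewrite mem_nth // (leq_trans (ltn_ord k)) // addn2.
  by exists f.
pose fs k := sval (pick k).
have [Sfs slope_fs] : (forall k, S (fs k)) /\ (forall k, slope (fs k) v eta = nth 0 sl k).
  by split=> k; case: (svalP (pick k)).
have [e e0 germs] := uniform_germ (fun k => PL_of_S (Sfs k)) eta_v.
have [a dep_a] := dep fs Sfs.
apply: (distinct_slopes_meet_finitely (c := fun k => fs k v + a k)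
  (s := fun k => nth 0 sl k) e0).
  move=> i j /eqP; rewrite nth_uniq ?lt_sorted_uniq // ?(leq_trans (ltn_ord _)) ?addn2 //.
  by move/eqP/val_inj.
move=> h he; have [i [j [ij Eij _]]] := dep_a (ray v eta h).
by exists i, j; split=> //; rewrite -!slope_fs addrAC -germs // Eij germs // addrAC.
Qed.

End LocalStructure.

Section Realization.
Variables (R : realType) (G : metric_graph R).
Notation gp := (gpoint G).
Variables (D : gp -> int) (S : (gp -> R) -> Prop) (r : nat).
Hypothesis S_fg : fg_tropical_submodule S.
Hypothesis S_RD : forall f, S f -> in_RD D f.
Hypothesis D_fin : divisor_fin_supp D.
Hypothesis S_chips : forall Es : seq gp, size Es = r ->
  exists2 f, S f & forall x, (count_mem x Es)%:Z <= D x + ord f x.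

Lemma exists_slope_ranks_ge (v : gp) (eta1 eta2 : dir G) (l : nat) :
  eta1 \in tangents v -> eta2 \in tangents v -> (l <= r)%N ->
  exists2 f, S f & (r - l <= slope_rank S v eta1 f)%N /\ (l <= slope_rank S v eta2 f)%N.
Proof.
move=> e1 e2 lr.
have [d1 d10 C1] := slope_rank_ge_of_chips S_fg S_RD e1.
have [d2 d20 C2] := slope_rank_ge_of_chips S_fg S_RD e2.
have [a1 a10 A1] := ray_avoid_support D_fin e1.
have [a2 a20 A2] := ray_avoid_support D_fin e2.
pose M := Num.min (Num.min d1 d2) (Num.min a1 a2).
have [M0 Md1 Md2 Ma1 Ma2] : [/\ 0 < M, M <= d1, M <= d2, M <= a1 & M <= a2].
  by rewrite /M !lt_min d10 d20 a10 a20 !ge_min !lexx !orbT.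
pose eps := M / r.+1%:R.
have eps0 : 0 < eps by rewrite divr_gt0 ?ltr0n.
have small k : (k <= r)%N -> k%:R * eps < M.
  by move=> kr; rewrite mulrA ltr_pdivrMr ?ltr0n // mulrC ltr_pM2l // ltr_nat ltnS.
have pt k : (k < r)%N -> 0 < k.+1%:R * eps < M.
  by move=> kr; rewrite mulr_gt0 ?ltr0n ?small.
pose chips eta n := [seq ray v eta (k.+1%:R * eps) | k <- iota 0 n].
have [f Sf Hf] : exists2 f, S f & forall x,
    (count_mem x (chips eta1 (r - l)%N ++ chips eta2 l))%:Z <= D x + ord f x.
  by apply: S_chips; rewrite size_cat !size_map !size_iota subnK.
have ord_chip x : x \in chips eta1 (r - l)%N ++ chips eta2 l -> D x = 0 -> 1 <= ord f x.
  move=> xE Dx; have := Hf x; rewrite Dx add0r; apply: le_trans.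
  by rewrite lez_nat -has_count has_pred1.
exists f => //; split.
  apply: (C1 f Sf _ eps eps0); first by apply: lt_le_trans (small _ (leq_subr l r)) Md1.
  move=> k kn; have /pt/andP[p0 pM] := leq_trans kn (leq_subr l r).
  apply: ord_chip; first by rewrite mem_cat (map_f (fun k => ray v eta1 _)) ?mem_iota.
  by apply: A1; rewrite p0; lra.
apply: (C2 f Sf _ eps eps0); first by apply: lt_le_trans (small _ lr) Md2.
move=> k kn; have /pt/andP[p0 pM] := leq_trans kn lr.
apply: ord_chip; first by rewrite mem_cat (map_f (fun k => ray v eta2 _)) ?mem_iota ?orbT.
by apply: A2; rewrite p0; lra.
Qed.

End Realization.

Section TwoDirections.
Variables (R : realType) (G : metric_graph R).
Notation gp := (gpoint G).

Lemma big_tangents2 (v : gp) (eta1 eta2 : dir G) (F : dir G -> int) :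
  valence v = 2%N -> eta1 \in tangents v -> eta2 \in tangents v -> eta1 != eta2 ->
  \sum_(eta <- tangents v) F eta = F eta1 + F eta2.
Proof.
rewrite /valence; case: (tangents v) => [|a [|b [|//]]] //= _.
rewrite !inE !big_cons big_nil addr0.
by move=> /orP[]/eqP-> /orP[]/eqP->; rewrite ?eqxx // addrC.
Qed.

Lemma slope_sum_le0 (D : gp -> int) (f : gp -> R) (v : gp) (eta1 eta2 : dir G) :
  in_RD D f -> D v = 0 -> valence v = 2%N ->
  eta1 \in tangents v -> eta2 \in tangents v -> eta1 != eta2 ->
  slope f v eta1 + slope f v eta2 <= 0.
Proof.
move=> [_ Df] Dv v2 e1 e2 e12; have := Df v.
by rewrite Dv add0r /ord (big_tangents2 (slope f v) v2 e1 e2 e12) oppr_ge0.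
Qed.

Lemma intr_min (a b : int) : (Num.min a b)%:~R = Num.min (a%:~R : R) b%:~R.
Proof.
by case: leP => ab; case: leP => ab' //; move: ab'; rewrite ?ler_int ?ltr_int => ab';
  congr _%:~R; lia.
Qed.

(* Both terms are shifted to vanish at [v], so that the slopes of the minimum
   at [v] are the minima of the slopes. *)
Definition tmin2_at (v : gp) (fA fB : gp -> R) : gp -> R :=
  tmin (n := 1) (fun i => if i == ord0 then fA else fB)
       (fun i => if i == ord0 then - fA v else - fB v).

Lemma tmin2_atE v fA fB x : tmin2_at v fA fB x = Num.min (fA x - fA v) (fB x - fB v).
Proof. by rewrite /tmin2_at /tmin !big_ord_recl big_ord0 /= minC -minA minxx minC. Qed.

Lemma slope_tmin2_at (fA fB : gp -> R) (v : gp) (eta : dir G) : PL fA -> PL fB ->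
  eta \in tangents v ->
  slope (tmin2_at v fA fB) v eta = Num.min (slope fA v eta) (slope fB v eta).
Proof.
move=> PA PB et; have [eA eA0 HA] := germ_ray et (PL_germ PA et).
have [eB eB0 HB] := germ_ray et (PL_germ PB et).
have [e0 eeA eeB] := min_gt0 eA0 eB0.
apply: ray_germ_slope et _; exists (Num.min eA eB) => // h /andP[h0 h1].
rewrite !tmin2_atE HA ?HB ?h0 /=; try lra.
rewrite !subrr minxx add0r ![_ + _ * h - _]addrAC !subrr !add0r.
by rewrite intr_min minr_pMl // ltW.
Qed.

End TwoDirections.

Section LocalArrayValence2.
Variables (R : realType) (G : metric_graph R) (r : nat).
Notation gp := (gpoint G).
Variables (D : gp -> int) (S : (gp -> R) -> Prop) (v : gp) (eta1 eta2 : dir G).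
Hypothesis D_fin : divisor_fin_supp D.
Hypothesis S_TLS : TLS r D S.
Hypothesis v_val2 : valence v = 2%N.
Hypotheses (eta1_v : eta1 \in tangents v) (eta2_v : eta2 \in tangents v).
Hypothesis eta12 : eta1 != eta2.
Hypothesis Dv0 : D v = 0.
Hypothesis slopes_sym : forall i : 'I_r.+1, sidx S v eta1 i + sidx S v eta2 (r - i) = 0.

Let S_fg : fg_tropical_submodule S. Proof. by case: S_TLS. Qed.
Let S_RD : forall f, S f -> in_RD D f. Proof. by case: S_TLS. Qed.
Let S_chips : forall Es : seq gp, size Es = r ->
  exists2 f, S f & forall x, (count_mem x Es)%:Z <= D x + ord f x.
Proof. by case: S_TLS. Qed.

Lemma size_slope_seq eta : eta \in tangents v -> size (slope_seq S v eta) = r.+1.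
Proof.
move=> et; apply/anti_leq; rewrite (size_slope_seq_le S_fg S_RD et) /=; last by case: S_TLS.
have [f Sf [rank_ge _]] := exists_slope_ranks_ge S_fg S_RD D_fin S_chips et et (leq0n r).
rewrite subn0 in rank_ge; apply: leq_ltn_trans rank_ge _; rewrite index_mem.
by apply/(proj2 (slope_seq_spec S_fg S_RD et)); exists f.
Qed.

Lemma slope_rank_lt eta f : eta \in tangents v -> S f -> (slope_rank S v eta f < r.+1)%N.
Proof.
move=> et Sf; rewrite -(size_slope_seq et) index_mem.
by apply/(proj2 (slope_seq_spec S_fg S_RD et)); exists f.
Qed.

Lemma slope_rank_eq eta f (k : nat) : eta \in tangents v -> S f -> (k < r.+1)%N ->
  (slope f v eta = sidx S v eta k) <-> slope_rank S v eta f = k.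
Proof.
move=> et Sf kr; have [sorted_s mem_s] := slope_seq_spec S_fg S_RD et.
rewrite /slope_rank /sidx; split=> [->|<-].
  by rewrite index_uniq ?lt_sorted_uniq ?size_slope_seq.
by rewrite nth_index //; apply/mem_s; exists f.
Qed.

Lemma local_array2P (x : {ffun 'I_2 -> 'I_r.+1}) :
  local_array S v (tnth [tuple eta1; eta2]) x <->
  exists2 f, S f &
    slope_rank S v eta1 f = x ord0 /\ slope_rank S v eta2 f = x (lift ord0 ord0).
Proof.
split=> [[f Sf Hf] | [f Sf [E1 E2]]]; exists f => //.
  split; first exact/(slope_rank_eq eta1_v Sf (ltn_ord _))/(Hf ord0).
  exact/(slope_rank_eq eta2_v Sf (ltn_ord _))/(Hf (lift ord0 ord0)).
move=> i; case: (ord2_cases i) => ->.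
  exact/(slope_rank_eq eta1_v Sf (ltn_ord _)).
exact/(slope_rank_eq eta2_v Sf (ltn_ord _)).
Qed.

(* [s_eta2[j] <= - s_eta1[i] = s_eta2[r - i]], so [j <= r - i]. *)
Lemma slope_rank_sum_le f : S f -> (slope_rank S v eta1 f + slope_rank S v eta2 f <= r)%N.
Proof.
move=> Sf; have [i_lt j_lt] := (slope_rank_lt eta1_v Sf, slope_rank_lt eta2_v Sf).
have [sorted2 _] := slope_seq_spec S_fg S_RD eta2_v.
have := slope_sum_le0 (S_RD Sf) Dv0 v_val2 eta1_v eta2_v eta12.
rewrite (proj2 (slope_rank_eq eta1_v Sf i_lt) erefl).
rewrite (proj2 (slope_rank_eq eta2_v Sf j_lt) erefl).
rewrite -(slopes_sym (Ordinal i_lt)) lerD2l /sidx /=.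
rewrite (lt_sorted_leq_nth 0 sorted2) ?inE ?size_slope_seq ?ltnS ?leq_subr //.
by rewrite -ltnS in i_lt; lia.
Qed.

Lemma exists_slope_ranks l : (l <= r)%N ->
  exists2 f, S f & slope_rank S v eta1 f = (r - l)%N /\ slope_rank S v eta2 f = l.
Proof.
move=> lr; have [f Sf [ge1 ge2]] :=
  exists_slope_ranks_ge S_fg S_RD D_fin S_chips eta1_v eta2_v lr.
by exists f => //; have := slope_rank_sum_le Sf; lia.
Qed.

Lemma slope_rank_tmin2_at eta fA fB : eta \in tangents v -> S fA -> S fB ->
  slope_rank S v eta (tmin2_at v fA fB) = minn (slope_rank S v eta fA) (slope_rank S v eta fB).
Proof.
move=> et SA SB; have [sorted_s mem_s] := slope_seq_spec S_fg S_RD et.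
have [inA inB] : slope fA v eta \in slope_seq S v eta /\ slope fB v eta \in slope_seq S v eta.
  by split; apply/mem_s; [exists fA | exists fB].
rewrite /slope_rank (slope_tmin2_at (PL_of_S S_RD SA) (PL_of_S S_RD SB) et).
case: (leP (slope fA v eta) (slope fB v eta)) => ab; apply/esym;
  [apply/minn_idPl | apply/minn_idPr].
  by rewrite -(lt_sorted_leq_nth 0 sorted_s) ?inE ?index_mem ?nth_index.
by rewrite -(lt_sorted_leq_nth 0 sorted_s) ?inE ?index_mem ?nth_index // ltW.
Qed.

Lemma local_array2_std (x : {ffun 'I_2 -> 'I_r.+1}) :
  local_array S v (tnth [tuple eta1; eta2]) x <-> x \in redundant_closure (std_perm_array2 r).
Proof.
rewrite mem_redundant_closure_std2 local_array2P.
split=> [[f Sf [<- <-]] | sum_le]; first exact: slope_rank_sum_le.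
have [fA SA [A1 A2]] := exists_slope_ranks (leq_subr (x ord0) r).
have [fB SB [B1 B2]] := exists_slope_ranks (leq_ord (x (lift ord0 ord0))).
exists (tmin2_at v fA fB); first by apply: (proj1 S_fg) => i; case: (i == ord0).
rewrite !slope_rank_tmin2_at // A1 A2 B1 B2 subKn ?leq_ord //.
by split; [apply/minn_idPl | apply/minn_idPr]; lia.
Qed.

End LocalArrayValence2.

Theorem mainTheorem5 (R : realType) (G : metric_graph R) (r : nat)
  (D : gpoint G -> int) (S : (gpoint G -> R) -> Prop)
  (v : gpoint G) (eta1 eta2 : dir G) :
  divisor_fin_supp D ->
  SR D r S ->
  valence v = 2%N ->
  eta1 \in tangents v -> eta2 \in tangents v -> eta1 != eta2 ->
  D v = 0 ->
  (forall i : 'I_r.+1, sidx S v eta1 i + sidx S v eta2 (r - i) = 0) ->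
  forall x : {ffun 'I_2 -> 'I_r.+1},
    local_array S v (tnth [tuple eta1; eta2]) x <->
    x \in redundant_closure (std_perm_array2 r).
Proof.
move=> D_fin S_SR v2 e1 e2 e12 Dv0 sym x.
have S_TLS : TLS r D S by case: S_SR.
exact: (local_array2_std D_fin S_TLS v2 e1 e2 e12 Dv0 sym x).
Qed.
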